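(* Fix $\sigma\in(0,\tfrac12)$. There exist $\lambda^{*}>0$ and $s^{*}\in(0,1)$ such that: (i) for all $\lambda\in(0,\lambda^{*})$, $\mathcal{I}^0_\lambda=(0,1)$; (ii) for $\lambda=\lambda^{*}$, $\mathcal{I}^0_\lambda=(0,1)\setminus\{s^{*}\}$; (iii) for all $\lambda>\lambda^{*}$ there exist $s_0,s_1\in(0,1)$ with $s_0<s^{*}<s_1$ such that $\mathcal{I}^0_\lambda=(0,s_0)\cup(s_1,1)$.
   Context: Let $g(s)=s^2(1-s)$ and $G(u)=u^3/3-u^4/4$ on $[0,1]$. For $\lambda>0$ and $s\in(0,1)$, let $(u_s,v_s)$ be the unique solution, on its maximal interval of existence, of $u'=v$, $v'=-\lambda g(u)$, $u(0)=s$, $v(0)=0$. Let $T_0(s)=T_0(s,\lambda)$ denote the time taken by $(u_s,v_s)$ to go from the point $(s,0)$ to the half-line $\{0\}\times(-\infty,0)$ moving forward along the level line $v^2+2\lambda G(u)=2\lambda G(s)$. Set $\mathcal{I}^0_\lambda=\{s\in(0,1): T_0(s)>\sigma\}$. *)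

From Stdlib Require Import Reals Lra.
Open Scope R_scope.

Definition g (s : R) : R := s ^ 2 * (1 - s).
Definition G (u : R) : R := u ^ 3 / 3 - u ^ 4 / 4.

(* IsT0 lam s t : t is the time T_0(s, lam) taken by the solution (u,v) of
   u' = v, v' = -lam g(u), u(0)=s, v(0)=0 to go from (s,0) to the half-line
   {0} x (-oo,0), i.e. the first positive time at which u = 0 (with v < 0).
   By uniqueness of solutions (g is locally Lipschitz) such t is unique. *)
Definition IsT0 (lam s t : R) : Prop :=
  0 < t /\
  exists u v : R -> R,
    (forall tau, 0 <= tau <= t ->
       derivable_pt_lim u tau (v tau) /\
       derivable_pt_lim v tau (- lam * g (u tau))) /\
    u 0 = s /\ v 0 = 0 /\
    (forall tau, 0 <= tau < t -> 0 < u tau) /\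
    u t = 0 /\ v t < 0.

Definition I0 (sigma lam s : R) : Prop :=
  0 < s < 1 /\ exists t, IsT0 lam s t /\ sigma < t.

(* Along the orbit through (s, 0) write u = s (1 - y ^ 2).  Energy conservation
   v ^ 2 + 2 lam G u = 2 lam G s becomes v = - s y sqrt (2 lam W s y), where
   W s y = (G s - G u) / (s ^ 2 y ^ 2) is a polynomial, positive for 0 < s < 1.
   Hence y runs from 0 to 1 with dt/dy = 2 / sqrt (2 lam W s y), so
   T_0(s, lam) = T1 s / sqrt lam with T1 s = int_0^1 2 / sqrt (2 W s y) dy, and
   I^0_lam = {s | sigma sqrt lam < T1 s}.  Since W is concave in s and x |-> 1/sqrt x
   is convex and decreasing, T1 is strictly convex on (0, 1); it tends to +oo at
   both ends (at least like sqrt (2 / s) and - ln (2 (1 - s))).  So T1 has a unique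
   minimiser s*, lam* = (T1 s* / sigma) ^ 2, and every superlevel set of T1 above
   its minimum is (0, s0) U (s1, 1). *)

From Stdlib Require Import Reals Lra Psatz ClassicalEpsilon.
From Coquelicot Require Import Coquelicot.
Open Scope R_scope.

(** * Convex functions *)

Definition convex_on (f : R -> R) (l r : R) : Prop :=
  forall a b mu, l < a < r -> l < b < r -> 0 <= mu <= 1 ->
    f (mu * a + (1 - mu) * b) <= mu * f a + (1 - mu) * f b.

Definition strictly_convex_on (f : R -> R) (l r : R) : Prop :=
  forall a b mu, l < a < r -> l < b < r -> a <> b -> 0 < mu < 1 ->
    f (mu * a + (1 - mu) * b) < mu * f a + (1 - mu) * f b.

Lemma strictly_convex_on_convex_on f l r : strictly_convex_on f l r -> convex_on f l r.
Proof.
  intros Hf a b mu Ha Hb Hmu.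
  destruct (Req_dec a b) as [<-|Hab].
  { replace (mu * a + (1 - mu) * a) with a by ring. lra. }
  destruct (Req_dec mu 0) as [->|H0].
  { replace (0 * a + (1 - 0) * b) with b by ring. lra. }
  destruct (Req_dec mu 1) as [->|H1].
  { replace (1 * a + (1 - 1) * b) with a by ring. lra. }
  apply Rlt_le, Hf; auto; lra.
Qed.

Lemma convex_on_reflect f l r : convex_on f l r -> convex_on (fun x => f (- x)) (- r) (- l).
Proof.
  intros Hf a b mu Ha Hb Hmu.
  replace (- (mu * a + (1 - mu) * b)) with (mu * - a + (1 - mu) * - b) by ring.
  apply Hf; lra.
Qed.

Lemma convex_on_right_bound f l r x d y : convex_on f l r ->
  0 < d -> l < x - d -> x + d < r -> x <= y <= x + d ->
  d * Rabs (f y - f x) <= (y - x) * (Rabs (f (x - d) - f x) + Rabs (f (x + d) - f x)).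
Proof.
  intros Hf Hd Hl Hr Hy.
  assert (Hup : d * (f y - f x) <= (y - x) * (f (x + d) - f x)).
  { set (mu := (y - x) / d).
    assert (Hmu : 0 <= mu <= 1).
    { unfold mu. split; [apply Rdiv_le_0_compat; lra|].
      apply Rmult_le_reg_r with d; [lra|]. unfold Rdiv. rewrite Rmult_assoc, Rinv_l; lra. }
    pose proof (Hf (x + d) x mu ltac:(lra) ltac:(lra) Hmu) as C.
    replace (mu * (x + d) + (1 - mu) * x) with y in C by (unfold mu; field; lra).
    apply (Rmult_le_compat_l d) in C; [|lra].
    replace (d * (mu * f (x + d) + (1 - mu) * f x)) with
      (d * f x + (y - x) * (f (x + d) - f x)) in C by (unfold mu; field; lra).
    lra. }
  assert (Hlow : d * (f x - f y) <= (y - x) * (f (x - d) - f x)).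
  { set (nu := (y - x) / (y - x + d)).
    assert (Hnu : 0 <= nu <= 1).
    { unfold nu. split; [apply Rdiv_le_0_compat; lra|].
      apply Rmult_le_reg_r with (y - x + d); [lra|].
      unfold Rdiv. rewrite Rmult_assoc, Rinv_l; lra. }
    pose proof (Hf (x - d) y nu ltac:(lra) ltac:(lra) Hnu) as C.
    replace (nu * (x - d) + (1 - nu) * y) with x in C by (unfold nu; field; lra).
    apply (Rmult_le_compat_l (y - x + d)) in C; [|lra].
    replace ((y - x + d) * (nu * f (x - d) + (1 - nu) * f y)) with
      ((y - x) * f (x - d) + d * f y) in C by (unfold nu; field; lra).
    lra. }
  pose proof (Rle_abs (f (x - d) - f x)). pose proof (Rle_abs (f (x + d) - f x)).
  pose proof (Rabs_pos (f (x - d) - f x)). pose proof (Rabs_pos (f (x + d) - f x)).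
  destruct (Rcase_abs (f y - f x)) as [h|h];
    [rewrite Rabs_left by exact h|rewrite Rabs_right by exact h]; nra.
Qed.

Lemma continuity_pt_of_local_lipschitz f x d K : 0 < d -> 0 <= K ->
  (forall y, Rabs (y - x) <= d -> Rabs (f y - f x) <= K * Rabs (y - x)) ->
  continuity_pt f x.
Proof.
  intros Hd HK Hb eps Heps.
  exists (Rmin d (eps / (K + 1))). split; [apply Rmin_glb_lt; [lra|apply Rdiv_lt_0_compat; lra]|].
  intros y [_ Hy]. simpl in *. unfold R_dist in *.
  pose proof (Rmin_l d (eps / (K + 1))). pose proof (Rmin_r d (eps / (K + 1))).
  pose proof (Hb y ltac:(lra)). pose proof (Rabs_pos (y - x)).
  assert (K * Rabs (y - x) <= K * (eps / (K + 1))) by (apply Rmult_le_compat_l; lra).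
  assert (K * (eps / (K + 1)) < eps).
  { apply Rmult_lt_reg_r with (K + 1); [lra|].
    replace (K * (eps / (K + 1)) * (K + 1)) with (K * eps) by (field; lra). nra. }
  lra.
Qed.

Lemma convex_on_continuous f l r x : convex_on f l r -> l < x < r -> continuity_pt f x.
Proof.
  intros Hf Hx.
  set (d := Rmin (x - l) (r - x) / 2).
  assert (Hd : 0 < d /\ l < x - d /\ x + d < r).
  { unfold d. pose proof (Rmin_l (x - l) (r - x)). pose proof (Rmin_r (x - l) (r - x)).
    pose proof (Rmin_glb_lt (x - l) (r - x) 0 ltac:(lra) ltac:(lra)). lra. }
  set (K := Rabs (f (x - d) - f x) + Rabs (f (x + d) - f x)).
  assert (HK : 0 <= K)
    by (pose proof (Rabs_pos (f (x - d) - f x)); pose proof (Rabs_pos (f (x + d) - f x)); unfold K; lra).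
  apply (continuity_pt_of_local_lipschitz f x d (K / d)); [lra|apply Rdiv_le_0_compat; lra|].
  intros y Hy. apply Rmult_le_reg_l with d; [lra|].
  replace (d * (K / d * Rabs (y - x))) with (Rabs (y - x) * K) by (field; lra).
  destruct (Rle_dec x y) as [Hxy|Hxy].
  - rewrite (Rabs_right (y - x)) by lra.
    apply (convex_on_right_bound f l r); [exact Hf|lra|lra|lra|]. rewrite Rabs_right in Hy; lra.
  - rewrite (Rabs_left (y - x)) by lra.
    pose proof (convex_on_right_bound _ _ _ (- x) d (- y) (convex_on_reflect f l r Hf))
      as Hb.
    cbv beta in Hb.
    replace (- (- x - d)) with (x + d) in Hb by ring.
    replace (- (- x + d)) with (x - d) in Hb by ring.
    rewrite !Ropp_involutive in Hb.
    rewrite Rabs_left in Hy by lra. unfold K. rewrite Rplus_comm.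
    replace (- (y - x)) with (- y - - x) by ring. apply Hb; lra.
Qed.

Section StrictlyConvex.

Variables (f : R -> R) (l r : R).
Hypothesis Hf : strictly_convex_on f l r.

Lemma strictly_convex_lt_max x y z : l < x -> x < y -> y < z -> z < r ->
  f y < Rmax (f x) (f z).
Proof.
  intros Hx Hxy Hyz Hz. set (mu := (z - y) / (z - x)).
  assert (Hmu : 0 < mu < 1).
  { unfold mu. split; [apply Rdiv_lt_0_compat; lra|].
    apply Rmult_lt_reg_r with (z - x); [lra|]. unfold Rdiv. rewrite Rmult_assoc, Rinv_l; lra. }
  pose proof (Hf x z mu ltac:(lra) ltac:(lra) ltac:(lra) Hmu) as C.
  replace (mu * x + (1 - mu) * z) with y in C by (unfold mu; field; lra).
  pose proof (Rmax_l (f x) (f z)). pose proof (Rmax_r (f x) (f z)). nra.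
Qed.

Lemma strictly_convex_strict_min m : l < m < r -> (forall x, l < x < r -> f m <= f x) ->
  forall x, l < x < r -> x <> m -> f m < f x.
Proof.
  intros Hm Hmin x Hx Hxm.
  pose proof (Hf x m (1 / 2) Hx Hm Hxm ltac:(lra)) as C.
  pose proof (Hmin (1 / 2 * x + (1 - 1 / 2) * m) ltac:(lra)). lra.
Qed.

Variable m : R.
Hypothesis Hm : l < m < r.
Hypothesis Hmin : forall x, l < x < r -> x <> m -> f m < f x.

Lemma strictly_convex_decreasing_left x y : l < x -> x < y -> y <= m -> f y < f x.
Proof.
  intros Hx Hxy Hy. assert (f m < f x) by (apply Hmin; lra).
  destruct (Req_dec y m) as [->|Hym]; [lra|].
  pose proof (strictly_convex_lt_max x y m Hx Hxy ltac:(lra) ltac:(lra)).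
  rewrite Rmax_left in * by lra. lra.
Qed.

Lemma strictly_convex_increasing_right x y : m <= x -> x < y -> y < r -> f x < f y.
Proof.
  intros Hx Hxy Hy. assert (f m < f y) by (apply Hmin; lra).
  destruct (Req_dec x m) as [->|Hxm]; [lra|].
  pose proof (strictly_convex_lt_max m x y ltac:(lra) ltac:(lra) Hxy Hy).
  rewrite Rmax_right in * by lra. lra.
Qed.

Lemma strictly_convex_superlevel c a b : l < a < m -> m < b < r ->
  f m < c -> c < f a -> c < f b ->
  exists s0 s1, a < s0 < m /\ m < s1 < b /\
    forall x, l < x < r -> (c < f x <-> x < s0 \/ s1 < x).
Proof.
  intros Ha Hb Hc Hca Hcb.
  assert (Hcont : forall x, l < x < r -> continuity_pt f x)
    by (intros; eapply convex_on_continuous; eauto using strictly_convex_on_convex_on).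
  destruct (Ranalysis5.f_interv_is_interv (fun x => - f x) a m (- c)) as [s0 [Hs0 E0]];
    [lra|lra|intros; apply continuity_pt_opp, Hcont; lra|].
  destruct (Ranalysis5.f_interv_is_interv f m b c) as [s1 [Hs1 E1]];
    [lra|lra|intros; apply Hcont; lra|].
  assert (s0 <> a /\ s0 <> m) as [] by (split; intros ->; lra).
  assert (s1 <> b /\ s1 <> m) as [] by (split; intros ->; lra).
  exists s0, s1. split; [lra|]. split; [lra|]. intros x Hx. split.
  - intros Hfx.
    destruct (Rlt_le_dec x s0) as [|Hs0x]; [now left|].
    destruct (Rlt_le_dec s1 x) as [|Hxs1]; [now right|].
    exfalso. destruct (Rle_lt_dec x m).
    + destruct (Req_dec x s0) as [->|]; [lra|].
      pose proof (strictly_convex_decreasing_left s0 x ltac:(lra) ltac:(lra) ltac:(lra)). lra.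
    + destruct (Req_dec x s1) as [->|]; [lra|].
      pose proof (strictly_convex_increasing_right x s1 ltac:(lra) ltac:(lra) ltac:(lra)). lra.
  - intros [Hx0|Hx1].
    + pose proof (strictly_convex_decreasing_left x s0 ltac:(lra) Hx0 ltac:(lra)). lra.
    + pose proof (strictly_convex_increasing_right s1 x ltac:(lra) Hx1 ltac:(lra)). lra.
Qed.

End StrictlyConvex.

Lemma derivable_pt_lim_comp_eq (F y : R -> R) x dF dy L :
  is_derive F (y x) dF -> derivable_pt_lim y x dy -> L = dy * dF ->
  derivable_pt_lim (fun t => F (y t)) x L.
Proof.
  intros HF Hy ->. apply is_derive_Reals.
  apply (is_derive_comp F y); [exact HF|now apply is_derive_Reals].
Qed.

Lemma unit_slope_increment (f : R -> R) a b : a < b ->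
  (forall x, a <= x <= b -> continuity_pt f x) ->
  (forall x, a < x < b -> derivable_pt_lim f x 1) -> f b - f a = b - a.
Proof.
  intros Hab Hc Hd.
  assert (prf : forall c, a < c < b -> derivable_pt f c) by (intros c Hc'; exists 1; now apply Hd).
  assert (prid : forall c, a < c < b -> derivable_pt id c) by (intros; apply derivable_pt_id).
  destruct (MVT f id a b prf prid Hab Hc) as [c [P E]].
  { intros; apply derivable_continuous_pt, derivable_pt_id. }
  rewrite (derive_pt_eq_0 f c 1 (prf c P) (Hd c P)),
    (derive_pt_eq_0 id c 1 (prid c P) (derivable_pt_lim_id c)) in E.
  unfold id in E. lra.
Qed.

(* The tangent line of x |-> 1 / sqrt x at x = m ^ 2, evaluated at x = A ^ 2. *)
Lemma inv_tangent_bound A m : 0 < A -> 0 < m -> / m - (A ^ 2 - m ^ 2) / (2 * m ^ 3) <= / A.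
Proof.
  intros HA Hm.
  assert (E : / A - (/ m - (A ^ 2 - m ^ 2) / (2 * m ^ 3)) =
              (A - m) ^ 2 * (A + 2 * m) / (2 * A * m ^ 3)) by (field; lra).
  assert (0 <= (A - m) ^ 2 * (A + 2 * m) / (2 * A * m ^ 3)).
  { apply Rle_mult_inv_pos; [apply Rmult_le_pos; [apply pow2_ge_0|lra]|].
    apply Rmult_lt_0_compat; [lra|]. apply pow_lt; lra. }
  lra.
Qed.

Lemma inv_sqrt_convex p q mu : 0 < p -> 0 < q -> 0 <= mu <= 1 ->
  / sqrt (mu * p + (1 - mu) * q) <= mu * / sqrt p + (1 - mu) * / sqrt q.
Proof.
  intros Hp Hq Hmu.
  assert (Hpq : 0 < mu * p + (1 - mu) * q) by nra.
  set (A := sqrt p). set (B := sqrt q). set (m := sqrt (mu * p + (1 - mu) * q)).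
  assert (HA : 0 < A) by (apply sqrt_lt_R0; lra).
  assert (HB : 0 < B) by (apply sqrt_lt_R0; lra).
  assert (Hm : 0 < m) by (apply sqrt_lt_R0; lra).
  assert (A2 : A ^ 2 = p) by (apply pow2_sqrt; lra).
  assert (B2 : B ^ 2 = q) by (apply pow2_sqrt; lra).
  assert (m2 : m ^ 2 = mu * p + (1 - mu) * q) by (apply pow2_sqrt; lra).
  pose proof (inv_tangent_bound A m HA Hm) as TA.
  pose proof (inv_tangent_bound B m HB Hm) as TB.
  (* the tangent corrections average out since m ^ 2 is the mean of A ^ 2 and B ^ 2 *)
  assert (E : mu * (/ m - (A ^ 2 - m ^ 2) / (2 * m ^ 3)) +
              (1 - mu) * (/ m - (B ^ 2 - m ^ 2) / (2 * m ^ 3)) = / m)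
    by (rewrite A2, B2, m2; field; lra).
  apply (Rmult_le_compat_l mu) in TA; [|lra].
  apply (Rmult_le_compat_l (1 - mu)) in TB; [|lra].
  lra.
Qed.

(** * The time map *)

Definition alpha (x : R) : R := (1 + x + x ^ 2) / 3.
Definition beta (x : R) : R := (1 + x) * (1 + x ^ 2) / 4.

Definition W (s z : R) : R := s * alpha (1 - z ^ 2) - s ^ 2 * beta (1 - z ^ 2).

Lemma W_ident s z : s ^ 2 * z ^ 2 * W s z = G s - G (s * (1 - z ^ 2)).
Proof. unfold W, alpha, beta, G. field. Qed.

Lemma alpha_sub_beta x : alpha x - beta x = (1 - x) * (3 * x ^ 2 + 2 * x + 1) / 12.
Proof. unfold alpha, beta. field. Qed.

Lemma W_pos s z : 0 < s < 1 -> 0 < W s z.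
Proof.
  intros Hs. unfold W. set (x := 1 - z ^ 2).
  assert (Hx : x <= 1) by (unfold x; nra).
  assert (Ha : 0 < alpha x) by (unfold alpha; pose proof (pow2_ge_0 (x + 1 / 2)); nra).
  assert (Hab : 0 <= alpha x - beta x) by (rewrite alpha_sub_beta; pose proof (pow2_ge_0 (3 * x + 1)); nra).
  replace (s * alpha x - s ^ 2 * beta x) with (s * (alpha x - s * beta x)) by ring.
  apply Rmult_lt_0_compat; [lra|].
  destruct (Rle_lt_dec (beta x) 0); nra.
Qed.

Lemma W_le s z : 0 < s < 1 -> 0 <= z <= 1 -> W s z <= s.
Proof.
  intros Hs Hz. unfold W, alpha, beta. set (x := 1 - z ^ 2).
  assert (Hx : 0 <= x <= 1) by (unfold x; nra).
  assert (0 <= (1 + x) * (1 + x ^ 2)) by (apply Rmult_le_pos; nra).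
  assert ((1 + x + x ^ 2) / 3 <= 1) by (simpl; nra).
  assert (s * ((1 + x + x ^ 2) / 3) <= s) by nra.
  assert (0 <= s ^ 2 * ((1 + x) * (1 + x ^ 2) / 4)) by (apply Rmult_le_pos; nra).
  lra.
Qed.

Lemma W_le_near_1 s z : 0 < s < 1 -> 0 <= z <= 1 -> W s z <= z ^ 2 / 2 + (1 - s).
Proof.
  intros Hs Hz.
  replace (W s z) with (s * (alpha (1 - z ^ 2) - beta (1 - z ^ 2)) + s * (1 - s) * beta (1 - z ^ 2))
    by (unfold W; ring).
  rewrite alpha_sub_beta. unfold beta. set (x := 1 - z ^ 2).
  assert (Hx : 0 <= x <= 1) by (unfold x; nra).
  replace (1 - x) with (z ^ 2) by (unfold x; ring).
  assert (0 <= 3 * x ^ 2 + 2 * x + 1 <= 6) by (simpl; nra).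
  assert (0 <= (1 + x) * (1 + x ^ 2) / 4 <= 1) by (simpl; nra).
  set (q := 3 * x ^ 2 + 2 * x + 1) in *. set (b := (1 + x) * (1 + x ^ 2) / 4) in *.
  set (z2 := z ^ 2). assert (0 <= z2) by apply pow2_ge_0.
  assert (0 <= z2 * q <= z2 * 6) by (split; [apply Rmult_le_pos|apply Rmult_le_compat_l]; lra).
  assert (s * (z2 * q / 12) <= z2 / 2) by nra.
  assert (s * b <= 1) by nra.
  assert (s * (1 - s) * b <= 1 - s) by nra.
  lra.
Qed.

Lemma W_mix a b mu z : W (mu * a + (1 - mu) * b) z =
  mu * W a z + (1 - mu) * W b z + mu * (1 - mu) * (a - b) ^ 2 * beta (1 - z ^ 2).
Proof. unfold W. ring. Qed.

Lemma ex_derive_W s z : ex_derive (W s) z.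
Proof. unfold W, alpha, beta. auto_derive. exact I. Qed.

Definition time_density (lam s z : R) : R := 2 / sqrt (2 * lam * W s z).

Definition elapsed (lam s y : R) : R := RInt (time_density lam s) 0 y.

Definition T1 (s : R) : R := elapsed 1 s 1.

Section Elapsed.

Variables lam s : R.
Hypothesis Hlam : 0 < lam.
Hypothesis Hs : 0 < s < 1.

Lemma sqrt_energy_pos z : 0 < sqrt (2 * lam * W s z).
Proof. apply sqrt_lt_R0. pose proof (W_pos s z Hs). nra. Qed.

Lemma time_density_pos z : 0 < time_density lam s z.
Proof. apply Rdiv_lt_0_compat; [lra|apply sqrt_energy_pos]. Qed.

Lemma time_density_continuous z : continuous (time_density lam s) z.
Proof.
  apply (ex_derive_continuous (time_density lam s)).
  unfold time_density. pose proof (sqrt_energy_pos z). auto_derive.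
  pose proof (W_pos s z Hs). repeat split; [apply ex_derive_W|nra|lra].
Qed.

Lemma ex_RInt_time_density a b : ex_RInt (time_density lam s) a b.
Proof.
  apply (@ex_RInt_continuous R_CompleteNormedModule).
  intros; apply time_density_continuous.
Qed.

Lemma elapsed_derive y : derivable_pt_lim (elapsed lam s) y (time_density lam s y).
Proof.
  apply is_derive_Reals, is_derive_RInt with (a := 0); [|apply time_density_continuous].
  apply filter_forall; intros b.
  apply (@RInt_correct R_CompleteNormedModule), ex_RInt_time_density.
Qed.

Lemma elapsed_continuous y : continuity_pt (elapsed lam s) y.
Proof. apply derivable_continuous_pt. exists (time_density lam s y). apply elapsed_derive. Qed.

Lemma elapsed_increasing a b : a < b -> elapsed lam s a < elapsed lam s b.
Proof.
  intros Hab.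
  destruct (MVT_cor2 (elapsed lam s) (time_density lam s) a b Hab) as [c [E _]].
  - intros; apply elapsed_derive.
  - pose proof (time_density_pos c). nra.
Qed.

Lemma elapsed_inj a b : elapsed lam s a = elapsed lam s b -> a = b.
Proof.
  intros E. destruct (Rtotal_order a b) as [h|[h|h]]; auto;
    apply elapsed_increasing in h; lra.
Qed.

Lemma elapsed_lt_iff a b : elapsed lam s a < elapsed lam s b <-> a < b.
Proof.
  split; [|apply elapsed_increasing].
  intros E. destruct (Rlt_le_dec a b) as [h|h]; [exact h|].
  destruct (Req_dec a b) as [->|h']; [lra|].
  assert (elapsed lam s b < elapsed lam s a) by (apply elapsed_increasing; lra). lra.
Qed.

Lemma elapsed_0 : elapsed lam s 0 = 0.
Proof. apply (@RInt_point R_CompleteNormedModule). Qed.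

End Elapsed.

Lemma elapsed_1_scaling lam s : 0 < lam -> 0 < s < 1 -> elapsed lam s 1 = T1 s / sqrt lam.
Proof.
  intros Hlam Hs.
  assert (Hsl : 0 < sqrt lam) by now apply sqrt_lt_R0.
  unfold T1, elapsed.
  rewrite (RInt_ext (time_density lam s) (fun z => scal (/ sqrt lam) (time_density 1 s z))).
  - rewrite (@RInt_scal R_CompleteNormedModule).
    + unfold scal; simpl; unfold mult; simpl. field. lra.
    + apply ex_RInt_time_density; lra.
  - intros z _. unfold scal; simpl; unfold mult; simpl. unfold time_density.
    pose proof (W_pos s z Hs).
    replace (2 * lam * W s z) with (lam * (2 * 1 * W s z)) by ring.
    rewrite sqrt_mult; try nra.
    assert (0 < sqrt (2 * 1 * W s z)) by (apply sqrt_lt_R0; lra).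
    field. lra.
Qed.

Definition elapsed_inv (lam s tau : R) : R :=
  epsilon (inhabits 0) (fun y => elapsed lam s y = tau).

Lemma elapsed_inv_spec lam s tau : 0 < lam -> 0 < s < 1 ->
  elapsed lam s (-1) <= tau <= elapsed lam s 2 ->
  elapsed lam s (elapsed_inv lam s tau) = tau /\ -1 <= elapsed_inv lam s tau <= 2.
Proof.
  intros Hlam Hs Htau.
  destruct (Ranalysis5.f_interv_is_interv (elapsed lam s) (-1) 2 tau) as [x [Hx Ex]];
    [lra|exact Htau|intros; now apply elapsed_continuous|].
  assert (E : elapsed lam s (elapsed_inv lam s tau) = tau).
  { apply (epsilon_spec (inhabits 0) (fun y => elapsed lam s y = tau)). now exists x. }
  split; [exact E|].
  assert (Ex' : elapsed lam s (elapsed_inv lam s tau) = elapsed lam s x) by congruence.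
  apply elapsed_inj in Ex'; [|lra|lra]. rewrite Ex'. lra.
Qed.

Lemma elapsed_inv_elapsed lam s y : 0 < lam -> 0 < s < 1 -> -1 <= y <= 2 ->
  elapsed_inv lam s (elapsed lam s y) = y.
Proof.
  intros Hlam Hs Hy.
  assert (Hwin : elapsed lam s (-1) <= elapsed lam s y <= elapsed lam s 2).
  { split; destruct (Req_dec y (-1)), (Req_dec y 2); subst; try lra;
      apply Rlt_le, elapsed_increasing; lra. }
  destruct (elapsed_inv_spec lam s _ Hlam Hs Hwin) as [E _].
  now apply elapsed_inj in E.
Qed.

Lemma elapsed_inv_derive lam s tau : 0 < lam -> 0 < s < 1 ->
  elapsed lam s (-1) < tau < elapsed lam s 2 ->
  derivable_pt_lim (elapsed_inv lam s) tau (1 / time_density lam s (elapsed_inv lam s tau)).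
Proof.
  intros Hlam Hs Htau.
  set (f := elapsed lam s). set (h := elapsed_inv lam s).
  assert (Prf : forall a, h (f (-1)) <= a <= h (f 2) -> derivable_pt f a).
  { intros a _. exists (time_density lam s a). now apply elapsed_derive. }
  assert (Hfh : forall x, f (-1) <= x <= f 2 -> comp f h x = id x).
  { intros x Hx. now apply elapsed_inv_spec. }
  assert (Hh : continuity_pt h tau).
  { apply (Ranalysis5.continuity_pt_recip_interv f h (-1) 2); try lra.
    - intros; apply elapsed_increasing; auto; lra.
    - intros; apply Hfh; lra.
    - intros; apply elapsed_inv_spec; auto.
    - intros; now apply elapsed_continuous.
    - exact Htau. }
  assert (Hwin : h (f (-1)) <= h tau <= h (f 2)).
  { unfold h, f. rewrite !elapsed_inv_elapsed; try lra. apply elapsed_inv_spec; auto; lra. }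
  assert (Hlu : f (-1) < f 2) by (unfold f in *; lra).
  pose proof (Ranalysis5.derivable_pt_lim_recip_interv f h (f (-1)) (f 2) tau Prf Hh
      Hlu Htau Hwin Hfh) as D.
  assert (E : derive_pt f (h tau) (Prf (h tau) Hwin) = time_density lam s (h tau)).
  { apply derive_pt_eq_0. now apply elapsed_derive. }
  rewrite E in D. apply D. pose proof (time_density_pos lam s Hlam Hs (h tau)). lra.
Qed.

Definition orbit_u (s y : R) : R := s * (1 - y ^ 2).
Definition orbit_v (lam s y : R) : R := - (s * y * sqrt (2 * lam * W s y)).

Lemma orbit_energy lam s y : 0 < lam -> 0 < s < 1 ->
  orbit_v lam s y ^ 2 + 2 * lam * G (orbit_u s y) = 2 * lam * G s.
Proof.
  intros Hlam Hs. pose proof (W_pos s y Hs).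
  assert (E : sqrt (2 * lam * W s y) ^ 2 = 2 * lam * W s y) by (apply pow2_sqrt; nra).
  unfold orbit_v, orbit_u.
  replace ((- (s * y * sqrt (2 * lam * W s y))) ^ 2) with
    (s ^ 2 * y ^ 2 * sqrt (2 * lam * W s y) ^ 2) by ring.
  rewrite E. pose proof (W_ident s y). nra.
Qed.

Lemma orbit_u_derive lam s y : 0 < lam -> 0 < s < 1 ->
  is_derive (orbit_u s) y (orbit_v lam s y * time_density lam s y).
Proof.
  intros Hlam Hs. pose proof (sqrt_energy_pos lam s Hlam Hs y).
  unfold orbit_u, orbit_v, time_density. auto_derive; [exact I|]. field. lra.
Qed.

Lemma orbit_v_derive lam s y : 0 < lam -> 0 < s < 1 ->
  is_derive (orbit_v lam s) y (- lam * g (orbit_u s y) * time_density lam s y).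
Proof.
  intros Hlam Hs. pose proof (W_pos s y Hs).
  pose proof (sqrt_energy_pos lam s Hlam Hs y).
  unfold orbit_v, orbit_u, time_density, g. unfold W, alpha, beta in *. auto_derive.
  - nra.
  - set (r := sqrt _) in *.
    assert (Hr2 : r * r = 2 * lam * (s * ((1 + (1 - y ^ 2) + (1 - y ^ 2) ^ 2) / 3) -
             s ^ 2 * ((1 + (1 - y ^ 2)) * (1 + (1 - y ^ 2) ^ 2) / 4))) by (apply sqrt_sqrt; nra).
    field_simplify; [|lra|lra].
    replace (r ^ 2) with (r * r) by ring. rewrite Hr2. field. lra.
Qed.

Lemma elapsed_inv_range lam s tau : 0 < lam -> 0 < s < 1 -> 0 <= tau <= elapsed lam s 1 ->
  0 <= elapsed_inv lam s tau <= 1 /\ (tau < elapsed lam s 1 -> elapsed_inv lam s tau < 1).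
Proof.
  intros Hlam Hs Htau.
  assert (Hlt := elapsed_lt_iff lam s Hlam Hs). assert (E0 := elapsed_0 lam s).
  assert (Hwin : elapsed lam s (-1) <= tau <= elapsed lam s 2).
  { assert (elapsed lam s (-1) < 0 /\ elapsed lam s 1 < elapsed lam s 2)
      by (rewrite <- E0; split; apply Hlt; lra).
    lra. }
  destruct (elapsed_inv_spec lam s tau Hlam Hs Hwin) as [Hy _].
  set (y := elapsed_inv lam s tau) in *.
  split; [split|intros Htau1].
  - destruct (Rlt_le_dec y 0) as [h|h]; [apply Hlt in h; lra|exact h].
  - destruct (Rlt_le_dec 1 y) as [h|h]; [apply Hlt in h; lra|exact h].
  - apply Hlt. lra.
Qed.

Lemma IsT0_elapsed lam s : 0 < lam -> 0 < s < 1 -> IsT0 lam s (elapsed lam s 1).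
Proof.
  intros Hlam Hs.
  set (t := elapsed lam s 1). set (y := elapsed_inv lam s).
  assert (Hlt := elapsed_lt_iff lam s Hlam Hs). assert (E0 := elapsed_0 lam s).
  assert (Ht : 0 < t) by (rewrite <- E0; apply Hlt; lra).
  assert (Hy_der : forall tau, 0 <= tau <= t ->
    derivable_pt_lim y tau (1 / time_density lam s (y tau))).
  { assert (elapsed lam s (-1) < 0 /\ t < elapsed lam s 2) by (rewrite <- E0; split; apply Hlt; lra).
    intros tau Htau. apply elapsed_inv_derive; auto; lra. }
  assert (Hy0 : y 0 = 0) by (rewrite <- E0 at 1; apply elapsed_inv_elapsed; auto; lra).
  assert (Hyt : y t = 1) by (apply elapsed_inv_elapsed; auto; lra).
  assert (Htd : forall z, time_density lam s z <> 0)
    by (intros z; pose proof (time_density_pos lam s Hlam Hs z); lra).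
  split; [exact Ht|].
  exists (fun tau => orbit_u s (y tau)), (fun tau => orbit_v lam s (y tau)).
  split; [|split; [|split; [|split; [|split]]]].
  - intros tau Htau. set (dy := 1 / time_density lam s (y tau)).
    assert (Hdy : derivable_pt_lim y tau dy) by (apply Hy_der; exact Htau).
    split.
    + apply (derivable_pt_lim_comp_eq _ y tau _ dy _ (orbit_u_derive lam s (y tau) Hlam Hs) Hdy).
      unfold dy. field. apply Htd.
    + apply (derivable_pt_lim_comp_eq _ y tau _ dy _ (orbit_v_derive lam s (y tau) Hlam Hs) Hdy).
      unfold dy. field. apply Htd.
  - unfold orbit_u. rewrite Hy0. ring.
  - unfold orbit_v. rewrite Hy0. ring.
  - intros tau Htau. destruct (elapsed_inv_range lam s tau Hlam Hs) as [Hr Hr1]; [fold t; lra|].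
    specialize (Hr1 (proj2 Htau)). fold y in Hr, Hr1.
    unfold orbit_u. apply Rmult_lt_0_compat; nra.
  - unfold orbit_u. rewrite Hyt. ring.
  - unfold orbit_v. rewrite Hyt. pose proof (sqrt_energy_pos lam s Hlam Hs 1). nra.
Qed.

(** * Every solution takes the time [elapsed lam s 1] *)

Lemma G_derive x : derivable_pt_lim G x (g x).
Proof. apply is_derive_Reals. unfold G, g. auto_derive; [exact I|]. field. Qed.

Lemma G_increasing a b : 0 <= a -> a < b -> b <= 1 -> G a < G b.
Proof.
  intros Ha Hab Hb.
  destruct (MVT_cor2 G g a b Hab) as [c [E Hc]]; [intros; apply G_derive|].
  assert (0 < g c) by (unfold g; apply Rmult_lt_0_compat; nra). nra.
Qed.

Lemma energy_derive lam (u v : R -> R) tau du dv :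
  derivable_pt_lim u tau du -> derivable_pt_lim v tau dv ->
  derivable_pt_lim (fun x => v x ^ 2 + 2 * lam * G (u x)) tau
    (2 * v tau * dv + 2 * lam * (du * g (u tau))).
Proof.
  intros Hu Hv. apply is_derive_Reals.
  apply is_derive_Reals in Hu. apply is_derive_Reals in Hv.
  apply (is_derive_plus (fun x => v x ^ 2) (fun x => 2 * lam * G (u x))).
  - replace (2 * v tau * dv) with (INR 2 * dv * v tau ^ Nat.pred 2) by (simpl; ring).
    now apply (is_derive_pow v 2 tau dv).
  - apply (is_derive_scal (fun x => G (u x))), (is_derive_comp G u tau); [|exact Hu].
    apply is_derive_Reals, G_derive.
Qed.

Section Solution.

Variables (lam s t : R) (u v : R -> R).
Hypothesis Hlam : 0 < lam.
Hypothesis Hs : 0 < s < 1.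
Hypothesis Ht : 0 < t.
Hypothesis Hder : forall tau, 0 <= tau <= t ->
  derivable_pt_lim u tau (v tau) /\ derivable_pt_lim v tau (- lam * g (u tau)).
Hypothesis Hu0 : u 0 = s.
Hypothesis Hv0 : v 0 = 0.
Hypothesis Hupos : forall tau, 0 <= tau < t -> 0 < u tau.
Hypothesis Hut : u t = 0.

Lemma solution_u_continuous tau : 0 <= tau <= t -> continuity_pt u tau.
Proof. intros. apply derivable_continuous_pt. exists (v tau). now apply Hder. Qed.

Lemma solution_energy tau : 0 <= tau <= t -> v tau ^ 2 + 2 * lam * G (u tau) = 2 * lam * G s.
Proof.
  intros Htau. destruct (Req_dec tau 0) as [->|Hne]; [rewrite Hu0, Hv0; ring|].
  destruct (MVT_cor2 (fun x => v x ^ 2 + 2 * lam * G (u x))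
    (fun c => 2 * v c * (- lam * g (u c)) + 2 * lam * (v c * g (u c))) 0 tau)
    as [c [E _]]; [lra|intros c Hc; apply energy_derive; apply Hder; lra|].
  rewrite Hu0, Hv0 in E. lra.
Qed.

Lemma solution_le_start tau : 0 <= tau <= t -> u tau <= s.
Proof.
  intros Htau. destruct (Rle_lt_dec (u tau) s) as [h|h]; [exact h|exfalso].
  set (w := (s + Rmin (u tau) 1) / 2).
  assert (Hw : s < w /\ w <= 1 /\ w <= u tau)
    by (unfold w; pose proof (Rmin_l (u tau) 1); pose proof (Rmin_r (u tau) 1);
        pose proof (Rmin_glb_lt (u tau) 1 s h ltac:(lra)); lra).
  destruct (Ranalysis5.f_interv_is_interv u 0 tau w) as [x [Hx Ex]].
  - destruct (Req_dec tau 0) as [->|]; [rewrite Hu0 in h; lra|lra].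
  - rewrite Hu0. lra.
  - intros; apply solution_u_continuous; lra.
  - pose proof (solution_energy x ltac:(lra)) as En. rewrite Ex in En.
    pose proof (G_increasing s w ltac:(lra) ltac:(lra) ltac:(lra)).
    pose proof (pow2_ge_0 (v x)). nra.
Qed.

Lemma solution_v_neg tau : 0 < tau <= t -> v tau < 0.
Proof.
  intros Htau.
  destruct (MVT_cor2 v (fun c => - lam * g (u c)) 0 tau) as [c [E Hc]];
    [lra|intros c Hc; apply Hder; lra|].
  assert (0 < g (u c)).
  { pose proof (Hupos c ltac:(lra)). pose proof (solution_le_start c ltac:(lra)).
    unfold g. apply Rmult_lt_0_compat; nra. }
  assert (0 < lam * g (u c) * tau)
    by (apply Rmult_lt_0_compat; [apply Rmult_lt_0_compat|]; lra).
  rewrite Hv0 in E. lra.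
Qed.

Lemma solution_lt_start tau : 0 < tau <= t -> u tau < s.
Proof.
  intros Htau. pose proof (solution_le_start tau ltac:(lra)).
  destruct (Req_dec (u tau) s) as [E|]; [|lra].
  pose proof (solution_energy tau ltac:(lra)) as En. rewrite E in En.
  pose proof (solution_v_neg tau Htau). nra.
Qed.

Let Y (tau : R) : R := sqrt (1 - u tau / s).

Lemma solution_Y_sq tau : 0 <= tau <= t -> Y tau ^ 2 = 1 - u tau / s.
Proof.
  intros Htau. pose proof (solution_le_start tau Htau).
  apply pow2_sqrt. apply Rmult_le_reg_r with s; [lra|].
  unfold Rdiv. rewrite Rmult_minus_distr_r, Rmult_assoc, Rinv_l; lra.
Qed.

Lemma solution_Y_pos tau : 0 < tau <= t -> 0 < Y tau.
Proof.
  intros Htau. pose proof (solution_lt_start tau Htau).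
  apply sqrt_lt_R0. apply Rmult_lt_reg_r with s; [lra|].
  unfold Rdiv. rewrite Rmult_minus_distr_r, Rmult_assoc, Rinv_l; lra.
Qed.

Lemma solution_orbit_u tau : 0 <= tau <= t -> u tau = orbit_u s (Y tau).
Proof. intros Htau. unfold orbit_u. rewrite solution_Y_sq by exact Htau. field. lra. Qed.

Lemma solution_orbit_v tau : 0 < tau <= t -> v tau = orbit_v lam s (Y tau).
Proof.
  intros Htau.
  pose proof (orbit_energy lam s (Y tau) Hlam Hs) as Eo.
  rewrite <- solution_orbit_u in Eo by lra.
  pose proof (solution_energy tau ltac:(lra)) as Ev.
  pose proof (solution_v_neg tau Htau).
  assert (orbit_v lam s (Y tau) < 0).
  { unfold orbit_v. pose proof (solution_Y_pos tau Htau).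
    pose proof (sqrt_energy_pos lam s Hlam Hs (Y tau)).
    assert (0 < s * Y tau * sqrt (2 * lam * W s (Y tau)))
      by (apply Rmult_lt_0_compat; [apply Rmult_lt_0_compat|]; lra).
    lra. }
  nra.
Qed.

Lemma solution_clock tau : 0 < tau < t ->
  derivable_pt_lim (fun x => elapsed lam s (Y x)) tau 1.
Proof.
  intros Htau. pose proof (solution_Y_pos tau ltac:(lra)) as HY0.
  pose proof (solution_Y_sq tau ltac:(lra)) as HY2.
  assert (HY : derivable_pt_lim Y tau (- v tau / (2 * s * Y tau))).
  { apply (derivable_pt_lim_comp_eq (fun z => sqrt (1 - z / s)) u tau
      (- / s * / (2 * Y tau)) (v tau)).
    - unfold Y. auto_derive; [nra|]. unfold Rminus, Rdiv. ring.
    - apply Hder. lra.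
    - field. split; lra. }
  apply (derivable_pt_lim_comp_eq (elapsed lam s) Y tau (time_density lam s (Y tau))
    (- v tau / (2 * s * Y tau))).
  - apply is_derive_Reals, elapsed_derive; assumption.
  - exact HY.
  - rewrite solution_orbit_v by lra. unfold orbit_v, time_density.
    pose proof (sqrt_energy_pos lam s Hlam Hs (Y tau)). field. repeat split; lra.
Qed.

Lemma solution_time : t = elapsed lam s 1.
Proof.
  assert (HY_cont : forall tau, 0 <= tau <= t -> continuity_pt Y tau).
  { intros tau Htau. apply (continuity_pt_comp (fun x => 1 - u x / s) sqrt).
    - apply continuity_pt_minus; [apply continuity_pt_const; intros ? ?; reflexivity|].
      apply continuity_pt_div; [apply solution_u_continuous; exact Htau|
        apply continuity_pt_const; intros ? ?; reflexivity|lra].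
    - apply continuity_pt_sqrt. rewrite <- solution_Y_sq by exact Htau. apply pow2_ge_0. }
  pose proof (unit_slope_increment (fun x => elapsed lam s (Y x)) 0 t Ht) as Inc.
  unfold Y in Inc. rewrite Hut, Hu0 in Inc.
  replace (1 - s / s) with 0 in Inc by (field; lra).
  replace (1 - 0 / s) with 1 in Inc by (field; lra).
  rewrite sqrt_0, sqrt_1, elapsed_0 in Inc by assumption.
  enough (elapsed lam s 1 - 0 = t - 0) by lra. apply Inc.
  - intros tau Htau. apply (continuity_pt_comp Y (elapsed lam s)); [now apply HY_cont|].
    now apply elapsed_continuous.
  - exact solution_clock.
Qed.

End Solution.

Lemma IsT0_iff lam s t : 0 < lam -> 0 < s < 1 -> IsT0 lam s t <-> t = T1 s / sqrt lam.
Proof.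
  intros Hlam Hs. rewrite <- elapsed_1_scaling by assumption. split.
  - intros [Ht [u [v [Hder [Hu0 [Hv0 [Hupos [Hut _]]]]]]]]. eapply solution_time; eauto.
  - intros ->. now apply IsT0_elapsed.
Qed.

Lemma I0_iff sigma lam s : 0 < lam -> I0 sigma lam s <-> 0 < s < 1 /\ sigma * sqrt lam < T1 s.
Proof.
  intros Hlam. assert (Hq : 0 < sqrt lam) by now apply sqrt_lt_R0.
  unfold I0. split; intros [Hs Ht]; split; auto.
  - destruct Ht as [t [Ht Hlt]]. rewrite IsT0_iff in Ht by assumption. subst t.
    apply (Rmult_lt_compat_r (sqrt lam)) in Hlt; [|exact Hq].
    unfold Rdiv in Hlt. rewrite Rmult_assoc, Rinv_l in Hlt; lra.
  - exists (T1 s / sqrt lam). rewrite IsT0_iff by assumption. split; [reflexivity|].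
    apply (Rmult_lt_reg_r (sqrt lam)); [exact Hq|].
    unfold Rdiv. rewrite Rmult_assoc, Rinv_l; lra.
Qed.

(** * Strict convexity and blow-up of T1 *)

Lemma time_density_strictly_convex a b mu z : 0 < a < 1 -> 0 < b < 1 -> a <> b ->
  0 < mu < 1 -> 0 <= z <= 1 ->
  time_density 1 (mu * a + (1 - mu) * b) z < mu * time_density 1 a z + (1 - mu) * time_density 1 b z.
Proof.
  intros Ha Hb Hab Hmu Hz. unfold time_density.
  pose proof (W_pos a z Ha). pose proof (W_pos b z Hb).
  assert (Hbeta : 0 < beta (1 - z ^ 2)).
  { unfold beta. assert (0 <= 1 - z ^ 2) by nra.
    apply Rmult_lt_0_compat; [apply Rmult_lt_0_compat|]; nra. }
  assert (Hgap : 0 < mu * (1 - mu) * (a - b) ^ 2 * beta (1 - z ^ 2)).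
  { apply Rmult_lt_0_compat; [|lra]. apply Rmult_lt_0_compat; [nra|].
    rewrite <- Rsqr_pow2. apply Rsqr_pos_lt. lra. }
  set (Wm := mu * (2 * 1 * W a z) + (1 - mu) * (2 * 1 * W b z)).
  assert (HWm : 0 < Wm)
    by (unfold Wm; apply Rplus_lt_0_compat; apply Rmult_lt_0_compat; lra).
  assert (Emix : 2 * 1 * W (mu * a + (1 - mu) * b) z =
                 Wm + 2 * (mu * (1 - mu) * (a - b) ^ 2 * beta (1 - z ^ 2)))
    by (rewrite W_mix; unfold Wm; ring).
  assert (Hlt : / sqrt (2 * 1 * W (mu * a + (1 - mu) * b) z) < / sqrt Wm).
  { rewrite Emix. apply Rinv_lt_contravar.
    - apply Rmult_lt_0_compat; apply sqrt_lt_R0; lra.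
    - apply sqrt_lt_1_alt. lra. }
  pose proof (inv_sqrt_convex (2 * 1 * W a z) (2 * 1 * W b z) mu ltac:(lra) ltac:(lra) ltac:(lra))
    as Hconv.
  fold Wm in Hconv. unfold Rdiv. lra.
Qed.

Lemma T1_mix a b mu : 0 < a < 1 -> 0 < b < 1 ->
  RInt (fun z => mu * time_density 1 a z + (1 - mu) * time_density 1 b z) 0 1 =
  mu * T1 a + (1 - mu) * T1 b.
Proof.
  intros Ha Hb. unfold T1, elapsed.
  assert (Ia := ex_RInt_time_density 1 a ltac:(lra) Ha 0 1).
  assert (Ib := ex_RInt_time_density 1 b ltac:(lra) Hb 0 1).
  rewrite (@RInt_plus R_CompleteNormedModule (fun z => mu * time_density 1 a z)
             (fun z => (1 - mu) * time_density 1 b z));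
    [|apply (@ex_RInt_scal R_CompleteNormedModule); exact Ia
     |apply (@ex_RInt_scal R_CompleteNormedModule); exact Ib].
  exact (f_equal2 Rplus (@RInt_scal R_CompleteNormedModule _ _ _ mu Ia)
           (@RInt_scal R_CompleteNormedModule _ _ _ (1 - mu) Ib)).
Qed.

Lemma T1_strictly_convex : strictly_convex_on T1 0 1.
Proof.
  intros a b mu Ha Hb Hab Hmu. rewrite <- T1_mix by assumption.
  apply RInt_lt; [lra| | |].
  - intros z _.
    apply (continuous_plus (fun z => mu * time_density 1 a z) (fun z => (1 - mu) * time_density 1 b z));
      [apply (continuous_mult (fun _ => mu) (time_density 1 a))
      |apply (continuous_mult (fun _ => 1 - mu) (time_density 1 b))];
      (apply continuous_const || apply time_density_continuous; lra).
  - intros z _. apply time_density_continuous; [lra|].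
    replace (mu * a + (1 - mu) * b) with (b + mu * (a - b)) by ring.
    destruct (Rle_lt_dec a b); split; nra.
  - intros z Hz. apply time_density_strictly_convex; auto; lra.
Qed.

Lemma T1_pos s : 0 < s < 1 -> 0 < T1 s.
Proof.
  intros Hs. unfold T1. rewrite <- (elapsed_0 1 s) by (lra || assumption).
  apply elapsed_increasing; lra.
Qed.

Lemma T1_ge_near_0 s : 0 < s < 1 -> 2 / sqrt (2 * s) <= T1 s.
Proof.
  intros Hs. unfold T1, elapsed.
  replace (2 / sqrt (2 * s)) with (RInt (fun _ => 2 / sqrt (2 * s)) 0 1)
    by (rewrite (@RInt_const R_CompleteNormedModule); unfold scal; simpl; unfold mult; simpl; ring).
  apply RInt_le; [lra|apply ex_RInt_const|apply ex_RInt_time_density; lra|].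
  intros z Hz. unfold time_density. pose proof (W_pos s z Hs).
  pose proof (W_le s z Hs ltac:(lra)).
  unfold Rdiv. apply Rmult_le_compat_l; [lra|].
  apply Rinv_le_contravar; [apply sqrt_lt_R0; lra|]. apply sqrt_le_1_alt. lra.
Qed.

Lemma T1_ge_near_1 s : 0 < s < 1 -> - 2 * ln (sqrt (2 * (1 - s))) <= T1 s.
Proof.
  intros Hs. set (d := sqrt (2 * (1 - s))).
  assert (Hd : 0 < d) by (apply sqrt_lt_R0; lra).
  assert (Hd2 : d ^ 2 = 2 * (1 - s)) by (apply pow2_sqrt; lra).
  assert (Hlog : is_RInt (fun z => 2 / (z + d)) 0 1 (2 * ln (1 + d) - 2 * ln d)).
  { replace (2 * ln (1 + d) - 2 * ln d) with (minus (2 * ln (1 + d)) (2 * ln (0 + d)))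
      by (rewrite Rplus_0_l; reflexivity).
    apply (is_RInt_derive (fun z => 2 * ln (z + d))); intros z Hz;
      rewrite Rmin_left, Rmax_right in Hz by lra.
    - auto_derive; [lra|]. field. lra.
    - apply (ex_derive_continuous (fun z => 2 / (z + d))). auto_derive. lra. }
  assert (0 <= ln (1 + d)) by (rewrite <- ln_1; apply Rlt_le, ln_increasing; lra).
  apply Rle_trans with (2 * ln (1 + d) - 2 * ln d); [lra|].
  rewrite <- (is_RInt_unique _ _ _ _ Hlog). unfold T1, elapsed.
  apply RInt_le; [lra|eexists; exact Hlog|apply ex_RInt_time_density; lra|].
  intros z Hz. unfold time_density. pose proof (W_pos s z Hs).
  pose proof (W_le_near_1 s z Hs ltac:(lra)).
  unfold Rdiv. apply Rmult_le_compat_l; [lra|].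
  apply Rinv_le_contravar; [apply sqrt_lt_R0; lra|].
  (* [2 W s z <= z ^ 2 + d ^ 2 <= (z + d) ^ 2] *)
  rewrite <- (sqrt_pow2 (z + d)) by lra. apply sqrt_le_1_alt. nra.
Qed.

Lemma T1_unbounded_near_0 M : exists e, 0 < e < 1 /\ forall s, 0 < s <= e -> M < T1 s.
Proof.
  set (k := Rabs M + 1). assert (Hk : 0 < k) by (pose proof (Rabs_pos M); unfold k; lra).
  assert (Hk' : 0 < / k <= 1).
  { split; [apply Rinv_0_lt_compat; lra|].
    rewrite <- Rinv_1. apply Rinv_le_contravar; pose proof (Rabs_pos M); unfold k; lra. }
  assert (He : 0 < (/ k) ^ 2 / 2 < 1) by nra.
  exists ((/ k) ^ 2 / 2). split; [exact He|]. intros s Hs.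
  assert (Hsq : sqrt (2 * s) <= / k).
  { rewrite <- (sqrt_pow2 (/ k)) by lra. apply sqrt_le_1_alt. lra. }
  assert (Hsq0 : 0 < sqrt (2 * s)) by (apply sqrt_lt_R0; lra).
  assert (Hb : k <= / sqrt (2 * s)).
  { rewrite <- (Rinv_inv k). apply Rinv_le_contravar; lra. }
  pose proof (T1_ge_near_0 s ltac:(lra)). pose proof (Rle_abs M).
  unfold Rdiv in *. unfold k in *. lra.
Qed.

Lemma T1_unbounded_near_1 M : exists e, 0 < e < 1 /\ forall s, 1 - e <= s < 1 -> M < T1 s.
Proof.
  set (q := exp (- M / 2)). assert (Hq : 0 < q) by apply exp_pos.
  set (e := Rmin (1 / 2) (q ^ 2 / 4)).
  assert (He : 0 < e <= 1 / 2 /\ e <= q ^ 2 / 4).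
  { unfold e. pose proof (Rmin_l (1 / 2) (q ^ 2 / 4)). pose proof (Rmin_r (1 / 2) (q ^ 2 / 4)).
    pose proof (Rmin_glb_lt (1 / 2) (q ^ 2 / 4) 0 ltac:(lra) ltac:(nra)). lra. }
  exists e. split; [lra|]. intros s Hs.
  pose proof (T1_ge_near_1 s ltac:(lra)).
  assert (Hd : 0 < sqrt (2 * (1 - s)) < q).
  { split; [apply sqrt_lt_R0; lra|].
    rewrite <- (sqrt_pow2 q) by lra. apply sqrt_lt_1_alt. nra. }
  assert (ln (sqrt (2 * (1 - s))) < - M / 2).
  { replace (- M / 2) with (ln q) by apply ln_exp. apply ln_increasing; lra. }
  lra.
Qed.

Lemma T1_continuous s : 0 < s < 1 -> continuity_pt T1 s.
Proof.
  apply (convex_on_continuous T1 0 1), strictly_convex_on_convex_on, T1_strictly_convex.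
Qed.

Lemma T1_strict_min : exists m, 0 < m < 1 /\ forall s, 0 < s < 1 -> s <> m -> T1 m < T1 s.
Proof.
  destruct (T1_unbounded_near_0 (T1 (1 / 2))) as [e0 [He0 L0]].
  destruct (T1_unbounded_near_1 (T1 (1 / 2))) as [e1 [He1 L1]].
  assert (e0 < 1 / 2 < 1 - e1) as [].
  { split; apply Rnot_le_lt; intros h; [specialize (L0 (1 / 2))|specialize (L1 (1 / 2))]; lra. }
  destruct (continuity_ab_min T1 e0 (1 - e1)) as [m [Hmin Hm]];
    [lra|intros; apply T1_continuous; lra|].
  exists m. split; [lra|].
  apply (strictly_convex_strict_min T1 0 1 T1_strictly_convex); [lra|].
  intros s Hs. pose proof (Hmin (1 / 2) ltac:(lra)).
  destruct (Rle_lt_dec s e0); [specialize (L0 s); lra|].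
  destruct (Rle_lt_dec (1 - e1) s); [specialize (L1 s); lra|].
  apply Hmin. lra.
Qed.

Lemma T1_superlevel m c : 0 < m < 1 -> (forall s, 0 < s < 1 -> s <> m -> T1 m < T1 s) ->
  T1 m < c -> exists s0 s1, 0 < s0 < m /\ m < s1 < 1 /\
    forall s, 0 < s < 1 /\ c < T1 s <-> 0 < s < s0 \/ s1 < s < 1.
Proof.
  intros Hm Hmin Hc.
  destruct (T1_unbounded_near_0 c) as [e0 [He0 L0]].
  destruct (T1_unbounded_near_1 c) as [e1 [He1 L1]].
  set (a := Rmin e0 (m / 2)). set (b := Rmax (1 - e1) ((1 + m) / 2)).
  assert (Ha : 0 < a <= e0 /\ a < m).
  { unfold a. pose proof (Rmin_l e0 (m / 2)). pose proof (Rmin_r e0 (m / 2)).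
    pose proof (Rmin_glb_lt e0 (m / 2) 0 ltac:(lra) ltac:(lra)). lra. }
  assert (Hb : 1 - e1 <= b < 1 /\ m < b).
  { unfold b. pose proof (Rmax_l (1 - e1) ((1 + m) / 2)). pose proof (Rmax_r (1 - e1) ((1 + m) / 2)).
    pose proof (Rmax_lub_lt (1 - e1) ((1 + m) / 2) 1 ltac:(lra) ltac:(lra)). lra. }
  destruct (strictly_convex_superlevel T1 0 1 T1_strictly_convex m Hm Hmin c a b)
    as [s0 [s1 [Hs0 [Hs1 Hlev]]]]; [lra|lra|exact Hc|apply L0; lra|apply L1; lra|].
  exists s0, s1. split; [lra|]. split; [lra|].
  intros s. split.
  - intros [Hs Hcs]. apply Hlev in Hcs; [lra|exact Hs].
  - intros Hs. split; [lra|]. apply Hlev; lra.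
Qed.

Theorem proposition2p1 (sigma : R) (Hsigma : 0 < sigma < 1 / 2) :
  exists lamstar sstar : R,
    0 < lamstar /\ 0 < sstar < 1 /\
    (forall lam, 0 < lam < lamstar ->
       forall s, I0 sigma lam s <-> 0 < s < 1) /\
    (forall s, I0 sigma lamstar s <-> (0 < s < 1 /\ s <> sstar)) /\
    (forall lam, lamstar < lam ->
       exists s0 s1, 0 < s0 < 1 /\ 0 < s1 < 1 /\ s0 < sstar < s1 /\
         forall s, I0 sigma lam s <-> (0 < s < s0 \/ s1 < s < 1)).
Proof.
  destruct T1_strict_min as [m [Hm Hmin]].
  pose proof (T1_pos m Hm).
  set (lamstar := (T1 m / sigma) ^ 2).
  assert (Hstar : 0 < lamstar /\ sigma * sqrt lamstar = T1 m).
  { unfold lamstar. split; [apply pow_lt, Rdiv_lt_0_compat; lra|].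
    rewrite sqrt_pow2 by (apply Rlt_le, Rdiv_lt_0_compat; lra). field. lra. }
  assert (Hmono : forall lam lam', 0 <= lam < lam' -> sigma * sqrt lam < sigma * sqrt lam')
    by (intros; apply Rmult_lt_compat_l, sqrt_lt_1_alt; lra).
  exists lamstar, m. split; [lra|]. split; [exact Hm|]. split; [|split].
  - intros lam Hlam s. rewrite I0_iff by lra. split; [tauto|]. intros Hs. split; [exact Hs|].
    pose proof (Hmono lam lamstar ltac:(lra)).
    destruct (Req_dec s m) as [->|]; [|pose proof (Hmin s Hs)]; lra.
  - intros s. rewrite I0_iff by lra. rewrite (proj2 Hstar).
    split; intros [Hs H']; split; try exact Hs; [intros ->; lra|now apply Hmin].
  - intros lam Hlam. pose proof (Hmono lamstar lam ltac:(lra)).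
    destruct (T1_superlevel m (sigma * sqrt lam) Hm Hmin ltac:(lra)) as [s0 [s1 [Hs0 [Hs1 Hlev]]]].
    exists s0, s1. do 3 (split; [lra|]). intros s. rewrite I0_iff by lra. apply Hlev.
Qed.
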